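(* Run the distributed regularized primal-dual algorithm described in the context for $T$ iterations with stepsize $\alpha(t)=\frac{R}{\sqrt{t+1}}$ and regularization parameter $\eta>0$ satisfying $\eta\alpha(t)\le\frac12$ for all $t\in[T]$. Then, as $T\to\infty$, \[ \left\|\left[\frac1n\sum_{i=1}^n g(\widehat{x}_i(T))\right]_+\right\|_2^2=\mathcal{O}(\eta). \] Furthermore, if the optimal solution $x_\ast$ is strictly feasible, i.e. $g_k(x_\ast)<0$ for all $k$, then \[ \left\|\left[\frac1n\sum_{i=1}^n g(\widehat{x}_i(T))\right]_+\right\|_2^2=\mathcal{O}\!\left(\frac{\eta\log(T)}{\sqrt{T}}\right). \]
   Context: $[v]_+$ denotes the componentwise positive part $\max\{0,v\}$. Norms are Euclidean. Problem: minimize $f(x)=\frac1n\sum_{i=1}^n f_i(x)$ over $\mathcal{X}=\{x\in\mathbb{R}^d: g_k(x)\le 0,\ k=1,\dots,m\}$; write $g=(g_1,\dots,g_m)^T$. Assumptions: $\mathcal{X}$ is non-empty, convex and compact; $R$ is the smallest radius with $\mathcal{X}\subseteq \mathbb{B}_d(R)=\{x:\|x\|\le R\}$; there is a Slater vector $\tilde x$ with $g_k(\tilde x)<0$ for all $k$; all $f_i$ and $g_k$ are convex on $\mathbb{B}_d(R)$ and all their subgradients there satisfy $\|\nabla f_i(x)\|\le L$, $\|\nabla g_k(x)\|\le L$. $x_\ast$ denotes an optimal solution. Agents $1,\dots,n$ are nodes of a connected graph $G=(V,E)$; $W\in\mathbb{R}^{n\times n}$ is doubly stochastic with $W_{ij}>0$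 if $(i,j)\in E$ and $W_{ij}=0$ if $(i,j)\notin E$. Regularized Lagrangian of agent $i$: $L_i(x,\lambda)=f_i(x)+\langle\lambda,g(x)\rangle-\frac{\eta}{2}\|\lambda\|^2$, with subgradients $\nabla_xL_i(x,\lambda)=\nabla f_i(x)+\sum_{k=1}^m\lambda_k\nabla g_k(x)$ and $\nabla_\lambda L_i(x,\lambda)=g(x)-\eta\lambda$. Algorithm: $x_i(0)=0$, $\lambda_i(0)=0$; for $t=0,1,2,\dots$: $y_i(t)=x_i(t)-\alpha(t)\nabla_xL_i(x_i(t),\lambda_i(t))$, $\gamma_i(t)=\lambda_i(t)+\alpha(t)\nabla_\lambda L_i(x_i(t),\lambda_i(t))$, $x_i(t+1)=\Pi_{\mathbb{B}_d(R)}(\sum_j W_{ij}y_j(t))$, $\lambda_i(t+1)=\Pi_{\mathbb{R}^m_+}(\sum_jW_{ij}\gamma_j(t))$, where $\Pi$ denotes Euclidean projection. The estimate is $\widehat{x}_i(T)=\sum_{t=0}^{T-1}\alpha(t)x_i(t)/\sum_{t=0}^{T-1}\alpha(t)$. *)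

From mathcomp Require Import all_boot all_order all_algebra.
From mathcomp Require Import all_classical all_reals all_analysis.
Set Implicit Arguments. Unset Strict Implicit. Unset Printing Implicit Defensive.
Import Order.TTheory GRing.Theory Num.Theory numFieldNormedType.Exports.
Local Open Scope ring_scope.

Section Defs.
Variable R : realType.

Definition dotv (k : nat) (u v : 'rV[R]_k) : R := \sum_(j < k) u ord0 j * v ord0 j.
Definition enorm (k : nat) (v : 'rV[R]_k) : R := Num.sqrt (dotv v v).

Definition inball (k : nat) (r : R) (x : 'rV[R]_k) : Prop := enorm x <= r.

Definition proj_ball (k : nat) (r : R) (v : 'rV[R]_k) : 'rV[R]_k :=
  if enorm v <= r then v else (r / enorm v) *: v.

Definition pospart (k : nat) (v : 'rV[R]_k) : 'rV[R]_k :=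
  map_mx (fun a => Num.max 0 a) v.

Definition convex_on (k : nat) (S : 'rV[R]_k -> Prop) (h : 'rV[R]_k -> R) : Prop :=
  forall x y (t : R), S x -> S y -> 0 <= t -> t <= 1 ->
    h (t *: x + (1 - t) *: y) <= t * h x + (1 - t) * h y.

Definition convex_setP (k : nat) (S : 'rV[R]_k -> Prop) : Prop :=
  forall x y (t : R), S x -> S y -> 0 <= t -> t <= 1 -> S (t *: x + (1 - t) *: y).

Definition subgrad_on (k : nat) (S : 'rV[R]_k -> Prop) (h : 'rV[R]_k -> R)
  (x v : 'rV[R]_k) : Prop :=
  forall y, S y -> h x + dotv v (y - x) <= h y.

Definition gvec (m d : nat) (g : 'I_m -> 'rV[R]_d -> R) (x : 'rV[R]_d) : 'rV[R]_m :=
  \row_k g k x.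

Definition feasible (m d : nat) (g : 'I_m -> 'rV[R]_d -> R) (x : 'rV[R]_d) : Prop :=
  forall k, g k x <= 0.

Definition favg (n d : nat) (f : 'I_n -> 'rV[R]_d -> R) (x : 'rV[R]_d) : R :=
  n%:R^-1 * \sum_(i < n) f i x.

Definition alpha (Rad : R) (t : nat) : R := Rad / Num.sqrt (t.+1)%:R.

Section Algo.
Variables (n m d : nat) (W : 'M[R]_n) (Rad eta : R).
Variables (df : 'I_n -> 'rV[R]_d -> 'rV[R]_d) (g : 'I_m -> 'rV[R]_d -> R)
          (dg : 'I_m -> 'rV[R]_d -> 'rV[R]_d).

(* subgradients of the regularized Lagrangian L_i *)
Definition gradx (i : 'I_n) (x : 'rV[R]_d) (lam : 'rV[R]_m) : 'rV[R]_d :=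
  df i x + \sum_(k < m) lam ord0 k *: dg k x.
Definition gradlam (x : 'rV[R]_d) (lam : 'rV[R]_m) : 'rV[R]_m :=
  gvec g x - eta *: lam.

Definition algo_step (t : nat) (s : 'I_n -> 'rV[R]_d * 'rV[R]_m) :
    'I_n -> 'rV[R]_d * 'rV[R]_m :=
  let y := fun j => (s j).1 - alpha Rad t *: gradx j (s j).1 (s j).2 in
  let gam := fun j => (s j).2 + alpha Rad t *: gradlam (s j).1 (s j).2 in
  fun i => (proj_ball Rad (\sum_(j < n) W i j *: y j),
            pospart (\sum_(j < n) W i j *: gam j)).

Fixpoint algo_state (t : nat) : 'I_n -> 'rV[R]_d * 'rV[R]_m :=
  match t with
  | 0 => fun _ => (0, 0)
  | t'.+1 => algo_step t' (algo_state t')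
  end.

Definition xs_iter (t : nat) (i : 'I_n) : 'rV[R]_d := (algo_state t i).1.

Definition xhat (T : nat) (i : 'I_n) : 'rV[R]_d :=
  (\sum_(t < T) alpha Rad t)^-1 *: \sum_(t < T) alpha Rad t *: xs_iter t i.

Definition violation (T : nat) : R :=
  enorm (pospart (n%:R^-1 *: \sum_(i < n) gvec g (xhat T i))) ^+ 2.
End Algo.

End Defs.

From mathcomp Require Import all_boot all_order all_algebra.
From mathcomp Require Import all_classical all_reals all_analysis.
From mathcomp Require Import ring lra zify.
Import Order.TTheory GRing.Theory Num.Theory numFieldNormedType.Exports.
Local Open Scope classical_set_scope.
Local Open Scope ring_scope.
Set Implicit Arguments. Unset Strict Implicit. Unset Printing Implicit Defensive.

Lemma sumr_const_ord (R : realType) (k : nat) (c : R) : \sum_(j < k) c = k%:R * c.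
Proof. by rewrite sumr_const card_ord mulr_natl. Qed.

Lemma sum_indicator_le (R : realType) (K : R) (T t1 : nat) : 0 <= K ->
  \sum_(t < T) (if (t < t1)%N then K else 0) <= t1%:R * K.
Proof.
move=> K0; suff -> : \sum_(t < T) (if (t < t1)%N then K else 0) = (minn T t1)%:R * K.
  by rewrite ler_wpM2r // ler_nat geq_minr.
elim: T => [|T IH]; first by rewrite big_ord0 min0n mul0r.
rewrite big_ord_recr /= IH; case: ifP => Tt1.
  by rewrite (_ : minn T.+1 t1 = (minn T t1).+1) ?mulrSr -?natr1 ?mulrDl ?mul1r //; lia.
by rewrite (_ : minn T.+1 t1 = minn T t1) ?addr0 //; move/negbT: Tt1; lia.
Qed.

Section Euclidean.
Variables (R : realType) (k : nat).
Implicit Types (u v w z : 'rV[R]_k) (a r : R).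

Definition sqnorm v := dotv v v.

Lemma dotvC u v : dotv u v = dotv v u.
Proof. by apply: eq_bigr => j _; rewrite mulrC. Qed.

Lemma dotvDl u v w : dotv (u + v) w = dotv u w + dotv v w.
Proof. by rewrite /dotv -big_split; apply: eq_bigr => j _; rewrite !mxE mulrDl. Qed.

Lemma dotvDr u v w : dotv w (u + v) = dotv w u + dotv w v.
Proof. by rewrite dotvC dotvDl !(dotvC w). Qed.

Lemma dotvZl a u w : dotv (a *: u) w = a * dotv u w.
Proof. by rewrite /dotv mulr_sumr; apply: eq_bigr => j _; rewrite !mxE mulrA. Qed.

Lemma dotvZr a u w : dotv w (a *: u) = a * dotv w u.
Proof. by rewrite dotvC dotvZl dotvC. Qed.

Lemma dotvNl u w : dotv (- u) w = - dotv u w.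
Proof. by rewrite -scaleN1r dotvZl mulN1r. Qed.

Lemma dotvNr u w : dotv w (- u) = - dotv w u.
Proof. by rewrite dotvC dotvNl dotvC. Qed.

Lemma dotvBl u v w : dotv (u - v) w = dotv u w - dotv v w.
Proof. by rewrite dotvDl dotvNl. Qed.

Lemma dotvBr u v w : dotv w (u - v) = dotv w u - dotv w v.
Proof. by rewrite dotvDr dotvNr. Qed.

Lemma dotv0l w : dotv 0 w = 0.
Proof. by rewrite /dotv big1 // => j _; rewrite mxE mul0r. Qed.

Lemma dotv0r w : dotv w 0 = 0.
Proof. by rewrite dotvC dotv0l. Qed.

Lemma dotv_suml (I : finType) (F : I -> 'rV[R]_k) w :
  dotv (\sum_i F i) w = \sum_i dotv (F i) w.
Proof.
rewrite /dotv exchange_big /=; apply: eq_bigr => j _.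
by rewrite summxE mulr_suml.
Qed.

Lemma dotv_sumr (I : finType) (F : I -> 'rV[R]_k) w :
  dotv w (\sum_i F i) = \sum_i dotv w (F i).
Proof. by rewrite dotvC dotv_suml; apply: eq_bigr => i _; rewrite dotvC. Qed.

Lemma sqnorm_ge0 v : 0 <= sqnorm v.
Proof. by apply: sumr_ge0 => j _; rewrite -expr2 sqr_ge0. Qed.

Lemma sqnorm_eq0 v : sqnorm v = 0 -> v = 0.
Proof.
move=> v0; apply/rowP => j; rewrite mxE; apply/eqP; rewrite -sqrf_eq0.
rewrite eq_le sqr_ge0 andbT -v0 /sqnorm /dotv (bigD1 j) //= -expr2 lerDl.
by apply: sumr_ge0 => i _; rewrite -expr2 sqr_ge0.
Qed.

Lemma sqnormD u v : sqnorm (u + v) = sqnorm u + 2 * dotv u v + sqnorm v.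
Proof. rewrite /sqnorm !dotvDl !dotvDr (dotvC v u); ring. Qed.

Lemma sqnormB u v : sqnorm (u - v) = sqnorm u - 2 * dotv u v + sqnorm v.
Proof. rewrite /sqnorm !dotvBl !dotvBr (dotvC v u); ring. Qed.

Lemma sqnormZ a u : sqnorm (a *: u) = a ^+ 2 * sqnorm u.
Proof. rewrite /sqnorm dotvZl dotvZr; ring. Qed.

Lemma sqnormN u : sqnorm (- u) = sqnorm u.
Proof. rewrite /sqnorm dotvNl dotvNr; ring. Qed.

Lemma enorm_ge0 v : 0 <= enorm v.
Proof. exact: sqrtr_ge0. Qed.

Lemma sqr_enorm v : enorm v ^+ 2 = sqnorm v.
Proof. by rewrite /enorm sqr_sqrtr // sqnorm_ge0. Qed.

Lemma enorm_leE v r : 0 <= r -> (enorm v <= r) = (sqnorm v <= r ^+ 2).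
Proof. by move=> r0; rewrite /enorm -{1}(ger0_norm r0) -sqrtr_sqr ler_sqrt ?sqr_ge0. Qed.

Lemma enorm0 : enorm (0 : 'rV[R]_k) = 0.
Proof. by rewrite /enorm dotv0l sqrtr0. Qed.

Lemma enormZ a v : enorm (a *: v) = `|a| * enorm v.
Proof. by rewrite /enorm -[dotv _ _]/(sqnorm _) sqnormZ sqrtrM ?sqr_ge0 // sqrtr_sqr. Qed.

Lemma enormN v : enorm (- v) = enorm v.
Proof. by rewrite /enorm -[dotv _ _]/(sqnorm _) sqnormN. Qed.

(* Cauchy-Schwarz: expand [0 <= sqnorm (u - t v)] at [t = <u, v> / |v|^2]. *)
Lemma sqr_dotv_le u v : dotv u v ^+ 2 <= sqnorm u * sqnorm v.
Proof.
have [v0|vn0] := eqVneq (sqnorm v) 0.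
  by rewrite (sqnorm_eq0 v0) dotv0r /sqnorm dotv0r expr0n /= mulr0.
have vp : 0 < sqnorm v by rewrite lt_def vn0 sqnorm_ge0.
have := sqnorm_ge0 (u - (dotv u v / sqnorm v) *: v).
rewrite sqnormB sqnormZ dotvZr.
have -> : sqnorm u - 2 * (dotv u v / sqnorm v * dotv u v)
          + (dotv u v / sqnorm v) ^+ 2 * sqnorm v
        = (sqnorm u * sqnorm v - dotv u v ^+ 2) / sqnorm v by field.
by rewrite pmulr_lge0 ?invr_gt0 // subr_ge0.
Qed.

Lemma normr_dotv_le u v : `|dotv u v| <= enorm u * enorm v.
Proof.
rewrite /enorm -sqrtrM ?sqnorm_ge0 // -sqrtr_sqr ler_sqrt ?mulr_ge0 ?sqnorm_ge0 //.
exact: sqr_dotv_le.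
Qed.

Lemma cauchy_schwarz u v : dotv u v <= enorm u * enorm v.
Proof. exact: le_trans (ler_norm _) (normr_dotv_le u v). Qed.

Lemma dotv_bound u v a r : enorm u <= a -> enorm v <= r -> `|dotv u v| <= a * r.
Proof. by move=> ua vr; apply: le_trans (normr_dotv_le _ _) (ler_pM _ _ ua vr); rewrite ?enorm_ge0. Qed.

Lemma ler_enormD u v : enorm (u + v) <= enorm u + enorm v.
Proof.
rewrite enorm_leE ?addr_ge0 ?enorm_ge0 // sqnormD sqrrD !sqr_enorm -mulr_natl.
by have := cauchy_schwarz u v; lra.
Qed.

Lemma ler_enormB u v : enorm (u - v) <= enorm u + enorm v.
Proof. by rewrite -(enormN v) ler_enormD. Qed.

Lemma lerB_enorm_dist u v : enorm u - enorm v <= enorm (u - v).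
Proof. by rewrite lerBlDr; apply: le_trans (ler_enormD _ _); rewrite subrK. Qed.

Lemma ler_enorm_sum (I : finType) (P : pred I) (F : I -> 'rV[R]_k) :
  enorm (\sum_(i | P i) F i) <= \sum_(i | P i) enorm (F i).
Proof.
elim/big_rec2: _ => [|i y x _ h]; first by rewrite enorm0.
by apply: le_trans (ler_enormD _ _) _; rewrite lerD2l.
Qed.

Lemma jensen_sqr (I : finType) (w b : I -> R) :
  (forall i, 0 <= w i) -> \sum_i w i = 1 ->
  (\sum_i w i * b i) ^+ 2 <= \sum_i w i * b i ^+ 2.
Proof.
move=> w0 w1; set mu := \sum_i w i * b i.
have : 0 <= \sum_i w i * (b i - mu) ^+ 2.
  by apply: sumr_ge0 => i _; rewrite mulr_ge0 ?sqr_ge0.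
have -> : \sum_i w i * (b i - mu) ^+ 2
    = \sum_i w i * b i ^+ 2 - 2 * mu * mu + mu ^+ 2 * \sum_i w i.
  rewrite (eq_bigr (fun i => w i * b i ^+ 2 - 2 * mu * (w i * b i) + mu ^+ 2 * w i)).
    by rewrite big_split sumrB /= -!mulr_sumr.
  by move=> i _; ring.
by rewrite w1; lra.
Qed.

Lemma jensen_sqnorm (I : finType) (w : I -> R) (u : I -> 'rV[R]_k) :
  (forall i, 0 <= w i) -> \sum_i w i = 1 ->
  sqnorm (\sum_i w i *: u i) <= \sum_i w i * sqnorm (u i).
Proof.
move=> w0 w1; rewrite /sqnorm /dotv.
under eq_bigr do rewrite summxE -expr2.
under [X in _ <= X]eq_bigr do rewrite mulr_sumr.
rewrite exchange_big /=; apply: ler_sum => j _.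
under eq_bigr do rewrite mxE.
under [X in _ <= X]eq_bigr do rewrite -expr2.
exact: jensen_sqr.
Qed.

Lemma enorm_convex_comb_le (I : finType) (w : I -> R) (p : I -> 'rV[R]_k) r :
  0 <= r -> (forall i, 0 <= w i) -> \sum_i w i = 1 -> (forall i, enorm (p i) <= r) ->
  enorm (\sum_i w i *: p i) <= r.
Proof.
move=> r0 w0 w1 pr; rewrite enorm_leE //.
apply: le_trans (jensen_sqnorm _ w0 w1) _.
apply: le_trans (_ : \sum_i w i * r ^+ 2 <= _); last by rewrite -mulr_suml w1 mul1r.
by apply: ler_sum => i _; rewrite ler_wpM2l // -enorm_leE.
Qed.

End Euclidean.

Section Projections.
Variables (R : realType) (k : nat).
Implicit Types (v w z : 'rV[R]_k) (r : R).

Lemma enorm_proj_ball_le r v : 0 <= r -> enorm (proj_ball r v) <= r.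
Proof.
move=> r0; rewrite /proj_ball; case: ifP => // /negbT; rewrite -ltNge => rv.
have v0 : 0 < enorm v by apply: le_lt_trans rv.
by rewrite enormZ ger0_norm ?divr_ge0 ?enorm_ge0 // divfK ?gt_eqF.
Qed.

Lemma proj_ball_contract r v z : 0 <= r -> enorm z <= r ->
  sqnorm (proj_ball r v - z) <= sqnorm (v - z).
Proof.
move=> r0 zr; rewrite /proj_ball; case: ifP => // /negbT; rewrite -ltNge => rv.
set N := enorm v; have N0 : 0 < N by apply: le_lt_trans rv.
set s := r / N.
have sN : s * N = r by rewrite /s divfK // gt_eqF.
have s0 : 0 <= s by rewrite divr_ge0 // enorm_ge0.
have s1 : s <= 1 by rewrite /s ler_pdivrMr // mul1r ltW.
have vz : dotv v z <= N * (s * N).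
  by rewrite sN; apply: le_trans (cauchy_schwarz _ _) _; rewrite ler_wpM2l // enorm_ge0.
rewrite !sqnormB sqnormZ dotvZl -(sqr_enorm v) -/N.
have : 0 <= (1 - s) * (N * (s * N) - dotv v z) by rewrite mulr_ge0 // subr_ge0.
have : 0 <= ((1 - s) * N) ^+ 2 by rewrite sqr_ge0.
nra.
Qed.

Lemma proj_ball_dist_le r v w : enorm w <= r ->
  enorm (proj_ball r v - v) <= enorm (v - w).
Proof.
move=> wr; rewrite /proj_ball; case: ifP => [_|/negbT].
  by rewrite subrr enorm0 enorm_ge0.
rewrite -ltNge => rv; set N := enorm v.
have N0 : 0 < N := le_lt_trans (le_trans (enorm_ge0 w) wr) rv.
rewrite -[X in _ - X]scale1r -scalerBl enormZ ler0_norm; last first.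
  by rewrite subr_le0 ler_pdivrMr // mul1r ltW.
rewrite opprB mulrBl mul1r divfK ?gt_eqF //.
by apply: le_trans (lerB_enorm_dist _ _); rewrite lerB.
Qed.

Lemma pospart_contract v z : (forall j, 0 <= z ord0 j) ->
  sqnorm (pospart v - z) <= sqnorm (v - z).
Proof.
move=> z0; apply: ler_sum => j _; rewrite !mxE -!expr2.
by have := z0 j; case: (leP 0 (v ord0 j)) => ? ?; rewrite ?max_r ?max_l //; nra.
Qed.

Lemma dotv_pospart v : dotv (pospart v) v = sqnorm (pospart v).
Proof.
apply: eq_bigr => j _; rewrite !mxE.
by case: (leP 0 (v ord0 j)) => vj; rewrite ?max_r ?max_l ?mul0r // ltW.
Qed.

End Projections.

Section Asymptotics.
Variable R : realType.

Lemma near_inftyP (P : nat -> Prop) :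
  (\forall T \near \oo, P T) -> exists T0, forall T, (T0 <= T)%N -> P T.
Proof. by case=> N _ hN; exists N => T /hN. Qed.

Lemma ln_le_root4 (x : R) : 0 < x -> ln x <= 4 * Num.sqrt (Num.sqrt x).
Proof.
move=> x0; set s := Num.sqrt (Num.sqrt x).
have s0 : 0 < s by rewrite !sqrtr_gt0.
have <- : s ^+ 4 = x.
  by rewrite (_ : 4 = 2 * 2)%N // exprM !sqr_sqrtr ?sqrtr_ge0 // ltW.
rewrite lnXn // -mulr_natl.
have : ln (1 + (s - 1)) <= s - 1 by apply: le_ln1Dx; lra.
by rewrite addrC subrK; lra.
Qed.

Lemma near_ln_ge (K : R) : \forall T \near \oo, K <= ln (T%:R : R).
Proof.
near=> T; rewrite -(expRK K) ler_ln ?posrE ?expR_gt0 //.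
  by near: T; exact: nbhs_infty_ger.
by apply: lt_le_trans (expR_gt0 K) _; near: T; exact: nbhs_infty_ger.
Unshelve. all: by end_near.
Qed.

Lemma near_sqrt_ge_ln (K : R) : 0 <= K ->
  \forall T \near \oo, K * (1 + ln (T%:R : R)) <= Num.sqrt T%:R.
Proof.
move=> K0; near=> T.
have T_ge : (4 * K + 1) ^+ 4 <= T%:R by near: T; exact: nbhs_infty_ger.
have T0 : 0 < T%:R :> R by apply: lt_le_trans T_ge; rewrite exprn_gt0 //; lra.
set s := Num.sqrt (Num.sqrt (T%:R : R)).
have s0 : 0 <= s by exact: sqrtr_ge0.
have s4 : s ^+ 4 = T%:R.
  by rewrite (_ : 4 = 2 * 2)%N // exprM !sqr_sqrtr ?sqrtr_ge0 // ltW.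
have s_ge : 4 * K + 1 <= s.
  by rewrite -(ler_pXn2r (_ : 0 < 4)%N) ?nnegrE ?s4 //; lra.
have -> : Num.sqrt (T%:R : R) = s * s by rewrite -expr2 sqr_sqrtr // sqrtr_ge0.
have := ln_le_root4 T0; rewrite -/s => lnT.
have : K * ln T%:R <= K * (4 * s) by rewrite ler_wpM2l.
have : (4 * K + 1) * s <= s * s by rewrite ler_wpM2r.
nra.
Unshelve. all: by end_near.
Qed.

Lemma near_sqrt_ge (K : R) : \forall T \near \oo, K <= Num.sqrt (T%:R : R).
Proof.
near=> T; apply: le_trans (ler_norm K) _.
rewrite -sqrtr_sqr ler_sqrt ?ler0n //.
by near: T; exact: nbhs_infty_ger.
Unshelve. all: by end_near.
Qed.

Lemma harmonic_le (T : nat) : (0 < T)%N ->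
  \sum_(t < T) (t.+1%:R : R)^-1 <= 1 + ln (T%:R : R).
Proof.
case: T => [//|T] _; elim: T => [|T IH]; first by rewrite big_ord1 ln1 invr1 addr0.
rewrite big_ord_recr /=; apply: le_trans (lerD IH (lexx _)) _.
suff : (T.+2%:R : R)^-1 <= ln (T.+2%:R : R) - ln T.+1%:R.
  by rewrite -addrA lerD2l addrC -lerBrDr.
have : -1 < - (T.+2%:R : R)^-1 by rewrite ltrN2 invf_lt1 ?ltr0n // ltr1n.
move=> /le_ln1Dx.
have -> : 1 - (T.+2%:R : R)^-1 = T.+1%:R / T.+2%:R.
  have -> : (T.+2%:R : R) = T.+1%:R + 1 by rewrite natr1.
  by field; apply/lt0r_neq0; have : 0 <= T%:R :> R := ler0n _ _; lra.
by rewrite ln_div ?posrE ?ltr0n // lerNr opprB.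
Qed.

(* With [S >= 2 / eta] the factor [S / eta - 1 / eta^2] is at least [S / (2 eta)]. *)
Lemma le_of_gap_le (p S eta M : R) : 0 <= p -> 0 < eta -> 2 / eta <= S ->
  p * (S / eta - 1 / eta ^+ 2) <= M -> p <= 2 * eta * M / S.
Proof.
move=> p0 eta0 S_ge pM; have S0 : 0 < S by apply: lt_le_trans S_ge; rewrite divr_gt0.
have gap : S / (2 * eta) <= S / eta - 1 / eta ^+ 2.
  rewrite -subr_ge0 (_ : _ - _ = (S - 2 / eta) / (2 * eta)); last by field; exact: lt0r_neq0.
  by rewrite divr_ge0 ?subr_ge0 // mulr_ge0 // ltW.
rewrite ler_pdivlMr // mulrC -ler_pdivrMl ?mulr_gt0 //.
apply: le_trans pM; rewrite [X in X <= _](_ : _ = p * (S / (2 * eta))); last by ring.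
exact: ler_wpM2l.
Qed.

Lemma exists_neg_margin (m : nat) (c : 'I_m -> R) : (forall k, c k < 0) ->
  exists2 del : R, 0 < del & forall k, c k <= - del.
Proof.
move=> c0; set s := \sum_k (- c k)^-1.
have s0 : 0 <= s by apply: sumr_ge0 => k _; rewrite invr_ge0 oppr_ge0 ltW.
exists (s + 1)^-1; first by rewrite invr_gt0; lra.
move=> k; rewrite lerNr -[- c k]invrK lef_pV2 ?posrE ?invr_gt0 ?oppr_gt0 //; last lra.
rewrite /s (bigD1 k) //= -addrA lerDl addr_ge0 //.
by apply: sumr_ge0 => j _; rewrite invr_ge0 oppr_ge0 ltW.
Qed.

End Asymptotics.

Section Stepsize.
Variables (R : realType) (Rad : R).
Hypothesis Rad0 : 0 <= Rad.

Lemma alpha_ge0 t : 0 <= alpha Rad t.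
Proof. by rewrite divr_ge0 // sqrtr_ge0. Qed.

Lemma alpha_le s t : (s <= t)%N -> alpha Rad t <= alpha Rad s.
Proof.
move=> st; rewrite ler_wpM2l // lef_pV2 ?posrE ?sqrtr_gt0 ?ltr0n //.
by rewrite ler_sqrt ?ler_nat ?ltnS.
Qed.

Lemma sum_alpha_ge (T : nat) : (0 < T)%N -> Rad * Num.sqrt T%:R <= \sum_(t < T) alpha Rad t.
Proof.
move=> T0; set q := Num.sqrt (T%:R : R).
have q0 : 0 < q by rewrite sqrtr_gt0 ltr0n.
have qq : q * q = T%:R by rewrite -expr2 sqr_sqrtr ?ler0n.
apply: le_trans (_ : \sum_(t < T) Rad / q <= _).
  by rewrite sumr_const card_ord -mulr_natr -qq mulrA divfK ?gt_eqF.
apply: ler_sum => t _; rewrite ler_wpM2l // lef_pV2 ?posrE ?sqrtr_gt0 ?ltr0n //.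
by rewrite ler_sqrt ?ler0n // ler_nat.
Qed.

Lemma sum_alpha_sqr_le (T : nat) : (0 < T)%N ->
  \sum_(t < T) alpha Rad t ^+ 2 <= Rad ^+ 2 * (1 + ln (T%:R : R)).
Proof.
move=> T0; rewrite (eq_bigr (fun t : 'I_T => Rad ^+ 2 * (t.+1%:R)^-1)); last first.
  by move=> t _; rewrite /alpha exprMn exprVn sqr_sqrtr ?ler0n.
by rewrite -mulr_sumr ler_wpM2l ?sqr_ge0 ?harmonic_le.
Qed.

Lemma exists_alpha_le (eps : R) : 0 < eps -> exists t, alpha Rad t <= eps.
Proof.
move=> eps0; have [t /(_ t (leqnn t)) t_ge] := near_inftyP (near_sqrt_ge (Rad / eps)).
exists t; rewrite /alpha ler_pdivrMr ?sqrtr_gt0 ?ltr0n // mulrC -ler_pdivrMr //.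
by apply: le_trans t_ge _; rewrite ler_sqrt ?ler0n // ler_nat.
Qed.

Lemma near_sum_alpha_ge (K : R) : 0 < Rad ->
  \forall T \near \oo, K <= \sum_(t < T) alpha Rad t.
Proof.
move=> Rad_gt0; near=> T.
have T0 : (0 < T)%N by near: T; exact: nbhs_infty_gt.
apply: le_trans (sum_alpha_ge T0); rewrite -ler_pdivrMl //.
by near: T; exact: near_sqrt_ge.
Unshelve. all: by end_near.
Qed.

(* [sum alpha^2 = O(log T)] is negligible against [sum alpha >= Rad sqrt T]. *)
Lemma near_sum_alpha_sqr_le (K : R) : 0 < Rad ->
  \forall T \near \oo, K * \sum_(t < T) alpha Rad t ^+ 2 <= \sum_(t < T) alpha Rad t.
Proof.
move=> Rad_gt0; near=> T.
have T0 : (0 < T)%N by near: T; exact: nbhs_infty_gt.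
apply: le_trans (sum_alpha_ge T0).
apply: le_trans (_ : `|K| * (Rad ^+ 2 * (1 + ln (T%:R : R))) <= _).
  apply: le_trans (ler_wpM2r _ (ler_norm K)) (ler_wpM2l _ (sum_alpha_sqr_le T0)) => //.
  by apply: sumr_ge0 => t _; exact: sqr_ge0.
rewrite mulrCA expr2 -mulrA ler_pM2l // mulrA.
by near: T; apply: near_sqrt_ge_ln; exact: mulr_ge0 (ltW Rad_gt0) (normr_ge0 K).
Unshelve. all: by end_near.
Qed.

End Stepsize.

Section Consensus.
Variables (R : realType) (n : nat) (W : 'M[R]_n) (E : rel 'I_n).
Hypothesis n_gt0 : (0 < n)%N.
Hypothesis W_ge0 : forall i j, 0 <= W i j.
Hypothesis W_row1 : forall i, \sum_j W i j = 1.
Hypothesis W_col1 : forall j, \sum_i W i j = 1.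
Hypothesis W_edge : forall i j, E i j -> 0 < W i j.
Hypothesis E_connected : forall i j, connect E i j.

Lemma nat_n_neq0 : (n%:R : R) != 0.
Proof. by rewrite pnatr_eq0 -lt0n. Qed.

(* For [v W = v], the Dirichlet form [sum_ij W_ij (v_i - v_j)^2] vanishes,
   so [v] is constant along the edges, hence on the connected graph. *)
Lemma fixed_row_const (v : 'rV[R]_n) : v *m W = v -> forall i j, v ord0 i = v ord0 j.
Proof.
move=> vW.
have vWj j : \sum_i v ord0 i * W i j = v ord0 j by rewrite -{2}vW mxE.
have dirichlet0 : \sum_i \sum_j W i j * (v ord0 i - v ord0 j) ^+ 2 = 0.
  have cross : \sum_i \sum_j v ord0 i * W i j * v ord0 j = \sum_j v ord0 j ^+ 2.
    rewrite exchange_big /=; apply: eq_bigr => j _.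
    by rewrite -mulr_suml vWj expr2.
  have -> : \sum_i \sum_j W i j * (v ord0 i - v ord0 j) ^+ 2
     = \sum_i \sum_j W i j * v ord0 i ^+ 2 + \sum_i \sum_j W i j * v ord0 j ^+ 2
       - 2 * \sum_i \sum_j v ord0 i * W i j * v ord0 j.
    rewrite mulr_sumr -big_split -sumrB /=; apply: eq_bigr => i _.
    by rewrite mulr_sumr -big_split -sumrB /=; apply: eq_bigr => j _; ring.
  have -> : \sum_i \sum_j W i j * v ord0 i ^+ 2 = \sum_i v ord0 i ^+ 2.
    by apply: eq_bigr => i _; rewrite -mulr_suml W_row1 mul1r.
  have -> : \sum_i \sum_j W i j * v ord0 j ^+ 2 = \sum_j v ord0 j ^+ 2.
    by rewrite exchange_big; apply: eq_bigr => j _; rewrite -mulr_suml W_col1 mul1r.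
  rewrite cross; ring.
have edge_eq i j : E i j -> v ord0 i = v ord0 j.
  move=> Eij; move/eqP: dirichlet0; rewrite psumr_eq0; last first.
    by move=> k _; apply: sumr_ge0 => l _; rewrite mulr_ge0 ?sqr_ge0.
  move=> /allP /(_ i (mem_index_enum i)) /implyP /(_ isT) /eqP /eqP.
  rewrite psumr_eq0; last by move=> l _; rewrite mulr_ge0 ?sqr_ge0.
  move=> /allP /(_ j (mem_index_enum j)) /implyP /(_ isT).
  by rewrite mulf_eq0 (gt_eqF (W_edge Eij)) sqrf_eq0 subr_eq0 => /eqP.
move=> i j; have /connectP [p pth ->] := E_connected i j.
elim: p i pth => [|c p IH] i //= /andP [Eic pth].
by rewrite (edge_eq _ _ Eic); apply: IH.
Qed.

Definition avg_mx : 'M[R]_n := const_mx n%:R^-1.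

Definition fundamental_mx : 'M[R]_n := 1%:M - W + avg_mx.

Lemma fundamental_mx_row_inj (v : 'rV[R]_n) : v *m fundamental_mx = 0 -> v = 0.
Proof.
rewrite /fundamental_mx mulmxDr mulmxBr mulmx1 => vM0.
set s := \sum_i v ord0 i.
have vMj j : v ord0 j - (v *m W) ord0 j + n%:R^-1 * s = 0.
  move/rowP: vM0 => /(_ j); rewrite !mxE => vMj.
  rewrite -[RHS]vMj; congr (_ + _).
  by rewrite /s mulr_sumr; apply: eq_bigr => i _; rewrite mxE mulrC.
have sum_vW : \sum_j (v *m W) ord0 j = s.
  under eq_bigr do rewrite mxE.
  by rewrite exchange_big /=; apply: eq_bigr => i _; rewrite -mulr_sumr W_row1 mulr1.
have s0 : s = 0.
  have : \sum_j (v ord0 j - (v *m W) ord0 j + n%:R^-1 * s) = 0 by rewrite big1.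
  rewrite big_split sumrB /= -/s sum_vW subrr add0r sumr_const card_ord.
  by move/eqP; rewrite -[_ *+ n]mulr_natl mulrA mulfV ?nat_n_neq0 // mul1r => /eqP.
have vW : v *m W = v.
  apply/rowP => j; have /eqP := vMj j.
  by rewrite s0 mulr0 addr0 subr_eq0 eq_sym => /eqP.
apply/rowP => i; rewrite mxE.
have : n%:R * v ord0 i = 0.
  rewrite -s0 /s (eq_bigr (fun=> v ord0 i)) => [|j _]; last exact: fixed_row_const.
  by rewrite sumr_const card_ord mulr_natl.
by move/eqP; rewrite mulf_eq0 (negbTE nat_n_neq0) => /eqP.
Qed.

Lemma fundamental_mx_unit : fundamental_mx \in unitmx.
Proof.
rewrite -row_free_unit -kermx_eq0; apply/eqP/row_matrixP => i.
by rewrite row0; apply: fundamental_mx_row_inj; apply/sub_kermxP; exact: row_sub.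
Qed.

Lemma mulmx_W_avg : W *m avg_mx = avg_mx.
Proof.
apply/matrixP => i j; rewrite !mxE.
by under eq_bigr do rewrite mxE; rewrite -mulr_suml W_row1 mul1r.
Qed.

Lemma avg_mx_idem : avg_mx *m avg_mx = avg_mx.
Proof.
apply/matrixP => i j; rewrite !mxE.
under eq_bigr do rewrite !mxE.
by rewrite sumr_const card_ord -[_ *+ n]mulr_natl mulrA mulfV ?nat_n_neq0 ?mul1r.
Qed.

Lemma invmx_fundamental_laplacian :
  invmx fundamental_mx *m (1%:M - W) = 1%:M - avg_mx.
Proof.
have <- : fundamental_mx *m (1%:M - avg_mx) = 1%:M - W.
  rewrite mulmxBr mulmx1 {2}/fundamental_mx mulmxDl mulmxBl mul1mx.
  by rewrite mulmx_W_avg avg_mx_idem subrr add0r /fundamental_mx addrK.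
by rewrite mulKmx // fundamental_mx_unit.
Qed.

Lemma row_mul_rows d (A : 'M[R]_n) (u : 'I_n -> 'rV[R]_d) i :
  row i (A *m \matrix_(j, c) u j ord0 c) = \sum_j A i j *: u j.
Proof. by apply/rowP => c; rewrite !mxE summxE; apply: eq_bigr => j _; rewrite !mxE. Qed.

(* [u - avg u = N (u - W u)] with [N] the inverse of the fundamental matrix. *)
Lemma consensus_error_le d : exists kap : R, 0 <= kap /\ forall u : 'I_n -> 'rV[R]_d,
  \sum_i enorm (u i - n%:R^-1 *: \sum_j u j)
  <= kap * \sum_i enorm (u i - \sum_j W i j *: u j).
Proof.
set N := invmx fundamental_mx; set K := \sum_i \sum_k `|N i k|.
have K0 : 0 <= K by do 2!apply: sumr_ge0 => ? _.
exists (n%:R * K); split => [|u]; first by rewrite mulr_ge0.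
set U := \matrix_(i, c) u i ord0 c.
have row_laplacian (A : 'M[R]_n) i : row i ((1%:M - A) *m U) = u i - \sum_j A i j *: u j.
  rewrite mulmxBl mul1mx linearB /= /U row_mul_rows; congr (_ - _).
  by apply/rowP => c; rewrite !mxE.
have avgE i : \sum_j avg_mx i j *: u j = n%:R^-1 *: \sum_j u j.
  by rewrite scaler_sumr; apply: eq_bigr => j _; rewrite mxE.
set e := fun k => enorm (u k - \sum_j W k j *: u j).
have dev i : enorm (u i - n%:R^-1 *: \sum_j u j) <= K * \sum_k e k.
  rewrite -(avgE i) -row_laplacian -invmx_fundamental_laplacian -mulmxA row_mul.
  rewrite mulmx_sum_row; apply: le_trans (ler_enorm_sum _ _) _.
  rewrite mulr_sumr; apply: ler_sum => k _.
  rewrite enormZ row_laplacian -/(e k) mxE ler_wpM2r ?enorm_ge0 // /K (bigD1 i) //= (bigD1 k) //=.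
  by rewrite -addrA lerDl addr_ge0 ?sumr_ge0 // => j _; rewrite sumr_ge0.
apply: le_trans (ler_sum _ (fun i _ => dev i)) _.
by rewrite sumr_const card_ord -[_ *+ n]mulr_natl mulrA.
Qed.

End Consensus.

Lemma subgrad_jensen (R : realType) k (S : 'rV[R]_k -> Prop) (h : 'rV[R]_k -> R)
    (c v : 'rV[R]_k) (I : finType) (w : I -> R) (p : I -> 'rV[R]_k) :
  subgrad_on S h c v -> (forall i, S (p i)) -> \sum_i w i *: (p i - c) = 0 ->
  (forall i, 0 <= w i) -> (\sum_i w i) * h c <= \sum_i w i * h (p i).
Proof.
move=> hc Sp bary w0; rewrite mulr_suml.
apply: le_trans (_ : \sum_i w i * (h c + dotv v (p i - c)) <= _).
  under [X in _ <= X]eq_bigr do rewrite mulrDr -dotvZr.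
  by rewrite big_split /= -dotv_sumr bary dotv0r addr0.
by apply: ler_sum => i _; rewrite ler_wpM2l ?hc.
Qed.

Lemma inball_convex_comb (R : realType) k (I : finType) (w : I -> R) (p : I -> 'rV[R]_k) r :
  0 <= r -> (forall i, 0 <= w i) -> 0 < \sum_i w i -> (forall i, inball r (p i)) ->
  inball r ((\sum_i w i)^-1 *: \sum_i w i *: p i).
Proof.
move=> r0 w0 w_gt0 pr; rewrite /inball scaler_sumr.
under eq_bigr do rewrite scalerA.
apply: enorm_convex_comb_le => //.
- by move=> i; rewrite mulr_ge0 ?w0 // invr_ge0 ltW.
- by rewrite -mulr_sumr mulVf ?gt_eqF.
Qed.

Section Analysis.
Variables (R : realType) (n m d : nat) (W : 'M[R]_n) (Rad eta L : R)
  (f : 'I_n -> 'rV[R]_d -> R) (df : 'I_n -> 'rV[R]_d -> 'rV[R]_d)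
  (g : 'I_m -> 'rV[R]_d -> R) (dg : 'I_m -> 'rV[R]_d -> 'rV[R]_d).

Hypothesis Rad_ge0 : 0 <= Rad.
Hypothesis eta_gt0 : 0 < eta.
Hypothesis eta_alpha : forall t, eta * alpha Rad t <= 1 / 2.
Hypothesis W_ge0 : forall i j, 0 <= W i j.
Hypothesis W_row1 : forall i, \sum_j W i j = 1.
Hypothesis W_col1 : forall j, \sum_i W i j = 1.
Hypothesis f_subgrad : forall i x, inball Rad x -> subgrad_on (inball Rad) (f i) x (df i x).
Hypothesis g_subgrad : forall k x, inball Rad x -> subgrad_on (inball Rad) (g k) x (dg k x).
Hypothesis df_bound : forall i x, inball Rad x -> enorm (df i x) <= L.
Hypothesis dg_bound : forall k x, inball Rad x -> enorm (dg k x) <= L.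

Local Notation x t i := (algo_state W Rad eta df g dg t i).1.
Local Notation lam t i := (algo_state W Rad eta df g dg t i).2.
Local Notation a t := (alpha Rad t).
Local Notation gx := (gradx df dg).
Local Notation gl := (gradlam eta g).
Local Notation xh T i := (xhat W Rad eta df g dg T i).

Lemma algo_stateS t i : algo_state W Rad eta df g dg t.+1 i =
  (proj_ball Rad (\sum_j W i j *: (x t j - a t *: gx j (x t j) (lam t j))),
   pospart (\sum_j W i j *: (lam t j + a t *: gl (x t j) (lam t j)))).
Proof. by []. Qed.

Lemma inball0 : inball Rad (0 : 'rV[R]_d).
Proof. by rewrite /inball enorm0. Qed.

Lemma iter_inball t i : inball Rad (x t i).
Proof. by case: t => [|t]; [exact: inball0 | exact: enorm_proj_ball_le]. Qed.

Lemma L_ge0 (k : 'I_m) : 0 <= L.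
Proof. exact: le_trans (enorm_ge0 _) (dg_bound k inball0). Qed.

Lemma sum_mix (c : 'I_n -> R) : \sum_i \sum_j W i j * c j = \sum_j c j.
Proof. by rewrite exchange_big; apply: eq_bigr => j _; rewrite -mulr_suml W_col1 mul1r. Qed.

Lemma sqnorm_mix_le k (y : 'I_n -> 'rV[R]_k) z i :
  sqnorm (\sum_j W i j *: y j - z) <= \sum_j W i j * sqnorm (y j - z).
Proof.
have -> : \sum_j W i j *: y j - z = \sum_j W i j *: (y j - z).
  by rewrite (eq_bigr _ (fun j _ => scalerBr _ _ _)) sumrB -scaler_suml W_row1 scale1r.
exact: jensen_sqnorm.
Qed.

(* [gbound] bounds every [|g_k|] on the ball: [g_k] is [L]-Lipschitz there. *)
Definition gbound := \sum_k (`|g k 0| + L * Rad).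

Lemma gbound_ge0 : 0 <= gbound.
Proof. by apply: sumr_ge0 => k _; rewrite addr_ge0 // mulr_ge0 // L_ge0. Qed.

Lemma normr_g_le k y : inball Rad y -> `|g k y| <= gbound.
Proof.
move=> yB; apply: le_trans (_ : `|g k 0| + L * Rad <= _); last first.
  rewrite /gbound (bigD1 k) //= lerDl.
  by apply: sumr_ge0 => j _; rewrite addr_ge0 // mulr_ge0 // L_ge0.
have := ler_norm (g k 0); have := ler_norm (- g k 0); rewrite normrN => ? ?.
rewrite ler_norml; apply/andP; split.
- have := g_subgrad k inball0 yB; rewrite subr0.
  by have := dotv_bound (dg_bound k inball0) yB; rewrite ler_norml; lra.
- have := g_subgrad k yB inball0; rewrite sub0r dotvNr.
  by have := dotv_bound (dg_bound k yB) yB; rewrite ler_norml; lra.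
Qed.

(* Each dual step is a convex combination [(1 - a eta) lam + a g] of points
   below [gbound / eta], because [a eta <= 1/2]. *)
Lemma dual_iter_bound t i k : 0 <= lam t i ord0 k <= gbound / eta.
Proof.
have B0 : 0 <= gbound / eta by rewrite divr_ge0 ?gbound_ge0 ?ltW.
elim: t i => [|t IH] i; first by rewrite mxE lexx.
rewrite algo_stateS mxE le_max lexx /= ge_max B0 /= summxE.
apply: le_trans (_ : \sum_j W i j * (gbound / eta) <= _); last first.
  by rewrite -mulr_suml W_row1 mul1r.
apply: ler_sum => j _; rewrite !mxE ler_wpM2l //.
have /andP [l0 lB] := IH j; move: (normr_g_le k (iter_inball t j)).
rewrite ler_norml => /andP [_ gB].
have := eta_alpha t; have := alpha_ge0 Rad_ge0 t.
set l := lam t j ord0 k; set at_ := a t.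
have -> : gbound / eta = (1 - at_ * eta) * (gbound / eta) + at_ * gbound by field; rewrite gt_eqF.
have -> : l + at_ * (g k (x t j) - eta * l) = (1 - at_ * eta) * l + at_ * g k (x t j) by ring.
move=> a0 aeta; apply: lerD; first by rewrite ler_wpM2l //; lra.
exact: ler_wpM2l.
Qed.

Lemma dual_iter_ge0 t i k : 0 <= lam t i ord0 k.
Proof. by case/andP: (dual_iter_bound t i k). Qed.

Definition lagrangian j (y : 'rV[R]_d) (l : 'rV[R]_m) :=
  f j y + dotv l (gvec g y) - eta / 2 * sqnorm l.

Lemma dotv_gvec (l : 'rV[R]_m) y : dotv l (gvec g y) = \sum_k l ord0 k * g k y.
Proof. by apply: eq_bigr => k _; rewrite mxE. Qed.

Lemma lagrangian_subgrad j (l : 'rV[R]_m) y : (forall k, 0 <= l ord0 k) -> inball Rad y ->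
  subgrad_on (inball Rad) (lagrangian j ^~ l) y (gx j y l).
Proof.
move=> l0 yB z zB; rewrite /lagrangian /gradx dotvDl dotv_suml !dotv_gvec.
suff : \sum_k l ord0 k * g k y + \sum_k dotv (l ord0 k *: dg k y) (z - y)
       <= \sum_k l ord0 k * g k z by have := f_subgrad j yB zB; lra.
rewrite -big_split; apply: ler_sum => k _ /=.
by rewrite dotvZl -mulrDr ler_wpM2l ?g_subgrad.
Qed.

Lemma lagrangian_supergrad j y (l l' : 'rV[R]_m) :
  lagrangian j y l' <= lagrangian j y l + dotv (gl y l) (l' - l).
Proof.
rewrite /lagrangian /gradlam dotvBl dotvZl !dotvBr (dotvC (gvec g y) l) (dotvC (gvec g y) l').
have := sqnorm_ge0 (l' - l); rewrite sqnormB /sqnorm (dotvC l l').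
by have := eta_gt0; nra.
Qed.

Definition saddle_gap j (xj xs : 'rV[R]_d) (lj lm : 'rV[R]_m) := lagrangian j xj lm - lagrangian j xs lj.

Definition grad_sqnorm j (xj : 'rV[R]_d) (lj : 'rV[R]_m) := sqnorm (gx j xj lj) + sqnorm (gl xj lj).

Lemma local_descent t j (xs : 'rV[R]_d) (lm : 'rV[R]_m) :
  inball Rad xs -> (forall k, 0 <= lm ord0 k) ->
  sqnorm (x t j - a t *: gx j (x t j) (lam t j) - xs)
  + sqnorm (lam t j + a t *: gl (x t j) (lam t j) - lm)
  <= sqnorm (x t j - xs) + sqnorm (lam t j - lm)
     - 2 * a t * saddle_gap j (x t j) xs (lam t j) lm
     + a t ^+ 2 * grad_sqnorm j (x t j) (lam t j).
Proof.
move=> xsB lm0.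
have primal := lagrangian_subgrad j (dual_iter_ge0 t j) (iter_inball t j) xsB.
have dual := lagrangian_supergrad j (x t j) (lam t j) lm.
rewrite addrAC (addrAC (lam t j)) (sqnormB (x t j - xs)) (sqnormD (lam t j - lm)) !sqnormZ !dotvZr.
rewrite /saddle_gap /grad_sqnorm -opprB dotvNr (dotvC _ (gx _ _ _)) in primal *.
rewrite -opprB dotvNr (dotvC (lam t j - lm)) in dual *.
have a0 := alpha_ge0 Rad_ge0 t; set A := a t in a0 *.
set P := dotv _ (x t j - xs) in primal *; set Q := dotv _ (lam t j - lm) in dual *.
have : A * (lagrangian j (x t j) (lam t j) - lagrangian j xs (lam t j)) <= A * P.
  by rewrite ler_wpM2l //; lra.
have : A * Q <= A * (lagrangian j (x t j) (lam t j) - lagrangian j (x t j) lm).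
  by rewrite ler_wpM2l //; lra.
nra.
Qed.

Definition dist_sq t (xs : 'rV[R]_d) (lm : 'rV[R]_m) := \sum_i (sqnorm (x t i - xs) + sqnorm (lam t i - lm)).
Definition gap_sum t (xs : 'rV[R]_d) (lm : 'rV[R]_m) := \sum_j saddle_gap j (x t j) xs (lam t j) lm.
Definition grad_sum t := \sum_j grad_sqnorm j (x t j) (lam t j).

Lemma dist_sq_step t (xs : 'rV[R]_d) (lm : 'rV[R]_m) : inball Rad xs -> (forall k, 0 <= lm ord0 k) ->
  dist_sq t.+1 xs lm <= dist_sq t xs lm - 2 * a t * gap_sum t xs lm + a t ^+ 2 * grad_sum t.
Proof.
move=> xsB lm0.
apply: le_trans (_ : \sum_j (sqnorm (x t j - a t *: gx j (x t j) (lam t j) - xs)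
    + sqnorm (lam t j + a t *: gl (x t j) (lam t j) - lm)) <= _).
  rewrite -sum_mix; apply: ler_sum => i _; rewrite algo_stateS /=.
  under [X in _ <= X]eq_bigr do rewrite mulrDr.
  rewrite big_split /=; apply: lerD.
    exact: le_trans (proj_ball_contract _ _ _) (sqnorm_mix_le _ _ _).
  exact: le_trans (pospart_contract _ lm0) (sqnorm_mix_le _ _ _).
apply: le_trans (ler_sum _ (fun j _ => local_descent t j xsB lm0)) _.
by rewrite /dist_sq /gap_sum /grad_sum !mulr_sumr -!sumrB -big_split.
Qed.

Lemma dist_sq_telescope T (xs : 'rV[R]_d) (lm : 'rV[R]_m) : inball Rad xs -> (forall k, 0 <= lm ord0 k) ->
  dist_sq T xs lm + 2 * \sum_(t < T) a t * gap_sum t xs lm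
  <= dist_sq 0 xs lm + \sum_(t < T) a t ^+ 2 * grad_sum t.
Proof.
move=> xsB lm0; elim: T => [|T IH]; first by rewrite !big_ord0 mulr0 !addr0.
by rewrite !big_ord_recr /=; have := dist_sq_step T xsB lm0; lra.
Qed.

Local Notation asum T := (\sum_(t < T) a t).

Lemma xhat_inball T j : 0 < asum T -> inball Rad (xh T j).
Proof.
by move=> S0; apply: inball_convex_comb => // [t|t]; [exact: alpha_ge0 | exact: iter_inball].
Qed.

Lemma xhat_barycenter T j : 0 < asum T -> \sum_(t < T) a t *: (x t j - xh T j) = 0.
Proof.
move=> S0; rewrite (eq_bigr _ (fun t _ => scalerBr _ _ _)) sumrB -scaler_suml.
by rewrite /xhat scalerA mulfV ?gt_eqF // scale1r subrr.
Qed.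

Definition dual_term t (xs : 'rV[R]_d) :=
  \sum_j (eta / 2 * sqnorm (lam t j) - dotv (lam t j) (gvec g xs)).

Lemma gap_sumE t (xs : 'rV[R]_d) (lm : 'rV[R]_m) : gap_sum t xs lm =
  \sum_j lagrangian j (x t j) lm - \sum_j f j xs + dual_term t xs.
Proof.
rewrite /gap_sum /dual_term -sumrB -big_split /=.
by apply: eq_bigr => j _; rewrite /saddle_gap /lagrangian; ring.
Qed.

Lemma weighted_gap_sum_ge T (xs : 'rV[R]_d) (lm : 'rV[R]_m) : 0 < asum T -> (forall k, 0 <= lm ord0 k) ->
  asum T * \sum_j lagrangian j (xh T j) lm - asum T * \sum_j f j xs
  + \sum_(t < T) a t * dual_term t xs
  <= \sum_(t < T) a t * gap_sum t xs lm.
Proof.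
move=> S0 lm0.
have -> : \sum_(t < T) a t * gap_sum t xs lm =
    \sum_(t < T) a t * \sum_j lagrangian j (x t j) lm - asum T * \sum_j f j xs
    + \sum_(t < T) a t * dual_term t xs.
  rewrite mulr_suml -sumrB -big_split; apply: eq_bigr => t _.
  by rewrite gap_sumE mulrDr mulrBr.
rewrite lerD2r lerD2r mulr_sumr.
under [X in _ <= X]eq_bigr do rewrite mulr_sumr.
rewrite [X in _ <= X]exchange_big; apply: ler_sum => j _.
apply: (subgrad_jensen (lagrangian_subgrad j lm0 (xhat_inball j S0))).
- by move=> t; exact: iter_inball.
- exact: xhat_barycenter.
- by move=> t; exact: alpha_ge0.
Qed.

Definition viol_vec T := pospart (n%:R^-1 *: \sum_j gvec g (xh T j)).

Lemma violationE T : violation W Rad eta df g dg T = sqnorm (viol_vec T).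
Proof. exact: sqr_enorm. Qed.

Lemma dotv_viol_vec T : (0 < n)%N ->
  dotv (viol_vec T) (\sum_j gvec g (xh T j)) = n%:R * sqnorm (viol_vec T).
Proof.
move=> n0; rewrite /viol_vec -[X in dotv _ X](scalerKV (nat_n_neq0 R n0)).
by rewrite dotvZr dotv_pospart.
Qed.

Lemma dist_sq0 xs lm : dist_sq 0 xs lm = n%:R * (sqnorm xs + sqnorm lm).
Proof.
rewrite /dist_sq (eq_bigr (fun=> sqnorm xs + sqnorm lm)) ?sumr_const ?card_ord ?mulr_natl //.
by move=> i _; rewrite !sub0r !sqnormN.
Qed.

Lemma dist_sq_ge0 t xs lm : 0 <= dist_sq t xs lm.
Proof. by apply: sumr_ge0 => i _; rewrite addr_ge0 ?sqnorm_ge0. Qed.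

Lemma sum_lagrangian_viol T : (0 < n)%N ->
  \sum_j lagrangian j (xh T j) (eta^-1 *: viol_vec T)
  = \sum_j f j (xh T j) + n%:R * sqnorm (viol_vec T) / (2 * eta).
Proof.
move=> n0; rewrite /lagrangian sumrB big_split /= -dotv_sumr dotvZl dotv_viol_vec //.
rewrite sqnormZ sumr_const card_ord -mulr_natl; field; exact: lt0r_neq0.
Qed.

(* The saddle-point inequality at the dual point [viol_vec T / eta]. *)
Lemma master_ineq T (xs : 'rV[R]_d) : (0 < n)%N -> 0 < asum T -> inball Rad xs ->
  n%:R * sqnorm (viol_vec T) * (asum T / eta - 1 / eta ^+ 2)
  + 2 * asum T * \sum_j (f j (xh T j) - f j xs)
  + 2 * \sum_(t < T) a t * dual_term t xs
  <= n%:R * sqnorm xs + \sum_(t < T) a t ^+ 2 * grad_sum t.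
Proof.
move=> n0 S0 xsB; set lm := eta^-1 *: viol_vec T.
have lm0 k : 0 <= lm ord0 k.
  by rewrite !mxE; apply: mulr_ge0; [rewrite invr_ge0 ltW | rewrite le_max lexx].
have := dist_sq_telescope T xsB lm0; have := weighted_gap_sum_ge xs S0 lm0.
have := dist_sq_ge0 T xs lm.
rewrite dist_sq0 sum_lagrangian_viol // sumrB /lm sqnormZ.
set p := sqnorm (viol_vec T); set S := asum T.
set F := \sum_j f j (xh T j); set Fs := \sum_j f j xs.
have -> : S * (F + n%:R * p / (2 * eta)) = S * F + S * (n%:R * p / eta) / 2.
  by field; exact: lt0r_neq0.
have -> : n%:R * (sqnorm xs + eta^-1 ^+ 2 * p) = n%:R * sqnorm xs + n%:R * p / eta ^+ 2.
  by field; exact: lt0r_neq0.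
have -> : n%:R * p * (S / eta - 1 / eta ^+ 2) = S * (n%:R * p / eta) - n%:R * p / eta ^+ 2.
  by field; exact: lt0r_neq0.
lra.
Qed.

Definition dual_mass t j := \sum_k lam t j ord0 k.

Definition mass_bound := m%:R * (gbound / eta).

Lemma mass_bound_ge0 : 0 <= mass_bound.
Proof. by rewrite mulr_ge0 // divr_ge0 ?gbound_ge0 ?ltW. Qed.

Lemma dual_mass_ge0 t j : 0 <= dual_mass t j.
Proof. by apply: sumr_ge0 => k _; exact: dual_iter_ge0. Qed.

Lemma dual_mass_le t j : dual_mass t j <= mass_bound.
Proof.
by rewrite /mass_bound -sumr_const_ord; apply: ler_sum => k _; case/andP: (dual_iter_bound t j k).
Qed.

Lemma enorm_gradx_le t j : enorm (gx j (x t j) (lam t j)) <= L * (1 + dual_mass t j).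
Proof.
rewrite mulrDr mulr1; apply: le_trans (ler_enormD _ _) (lerD _ _).
  exact: df_bound (iter_inball t j).
apply: le_trans (ler_enorm_sum _ _) _; rewrite /dual_mass mulr_sumr; apply: ler_sum => k _.
rewrite enormZ ger0_norm ?dual_iter_ge0 // mulrC ler_wpM2r ?dual_iter_ge0 //.
exact: dg_bound (iter_inball t j).
Qed.

Lemma grad_sqnorm_le t j : grad_sqnorm j (x t j) (lam t j)
  <= L ^+ 2 * (1 + dual_mass t j) ^+ 2 + m%:R * (4 * gbound ^+ 2).
Proof.
apply: lerD.
  rewrite -sqr_enorm -exprMn ler_pXn2r ?nnegrE ?enorm_ge0 ?enorm_gradx_le //.
  exact: le_trans (enorm_ge0 _) (enorm_gradx_le t j).
rewrite /sqnorm /dotv -sumr_const_ord; apply: ler_sum => k _; rewrite !mxE -expr2.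
have := normr_g_le k (iter_inball t j); rewrite ler_norml => /andP [g1 g2].
have /andP [l0 l1] := dual_iter_bound t j k.
have : eta * lam t j ord0 k <= gbound by rewrite mulrC -ler_pdivlMr.
have : 0 <= eta * lam t j ord0 k by rewrite mulr_ge0 // ltW.
by have := gbound_ge0; nra.
Qed.

Definition grad_const := n%:R * (2 * L ^+ 2 + m%:R * (4 * gbound ^+ 2)).

Lemma grad_sum_le_mass t :
  grad_sum t <= grad_const + 2 * L ^+ 2 * mass_bound * \sum_j dual_mass t j.
Proof.
rewrite /grad_sum /grad_const mulr_sumr -sumr_const_ord -big_split /=.
apply: ler_sum => j _; apply: le_trans (grad_sqnorm_le t j) _.
have := dual_mass_le t j; have := dual_mass_ge0 t j.
set l := dual_mass t j => l0 lB.
have : (1 + l) ^+ 2 <= 2 + 2 * mass_bound * l.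
  have : l * l <= mass_bound * l by rewrite ler_wpM2r.
  by have := sqr_ge0 (1 - l); nra.
by move=> /(ler_wpM2l (sqr_ge0 L)); nra.
Qed.

Definition grad_sum_bound := grad_const + 2 * L ^+ 2 * mass_bound * (n%:R * mass_bound).

Lemma grad_sum_le t : grad_sum t <= grad_sum_bound.
Proof.
apply: le_trans (grad_sum_le_mass t) _; rewrite lerD2l; apply: ler_wpM2l.
  by rewrite mulr_ge0 ?mass_bound_ge0 // mulr_ge0 ?sqr_ge0.
by rewrite -sumr_const_ord; apply: ler_sum => j _; exact: dual_mass_le.
Qed.

Lemma dual_term_ge0 t xs : feasible g xs -> 0 <= dual_term t xs.
Proof.
move=> xsX; apply: sumr_ge0 => j _; rewrite dotv_gvec subr_ge0.
apply: (@le_trans _ _ 0); last by rewrite mulr_ge0 ?sqnorm_ge0 ?divr_ge0 ?ltW.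
by rewrite -oppr_ge0 -sumrN; apply: sumr_ge0 => k _; rewrite -mulrN mulr_ge0 ?dual_iter_ge0 ?oppr_ge0.
Qed.

Lemma dual_term_ge_margin t xs del : (forall k, g k xs <= - del) ->
  del * \sum_j dual_mass t j <= dual_term t xs.
Proof.
move=> margin; rewrite mulr_sumr; apply: ler_sum => j _.
rewrite dotv_gvec /dual_mass mulr_sumr.
have : 0 <= eta / 2 * sqnorm (lam t j) by rewrite mulr_ge0 ?sqnorm_ge0 ?divr_ge0 ?ltW.
suff : \sum_k del * lam t j ord0 k <= - \sum_k lam t j ord0 k * g k xs by lra.
rewrite -sumrN; apply: ler_sum => k _.
by rewrite -mulrN mulrC ler_wpM2l ?dual_iter_ge0 // lerNr.
Qed.

Lemma sum_f_xhat_ge_diam T xs : 0 < asum T -> inball Rad xs ->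
  - (n%:R * (L * (2 * Rad))) <= \sum_j (f j (xh T j) - f j xs).
Proof.
move=> S0 xsB; rewrite -sumr_const_ord -sumrN; apply: ler_sum => j _.
have := f_subgrad j xsB (xhat_inball j S0).
have : enorm (xh T j - xs) <= 2 * Rad.
  by have := ler_enormB (xh T j) xs; have := xhat_inball j S0; rewrite /inball in xsB *; lra.
move=> /(dotv_bound (df_bound j xsB)); rewrite ler_norml => /andP [? _]; lra.
Qed.

Lemma violation_bound_feasible T xs : (0 < n)%N -> 0 < asum T ->
  feasible g xs -> inball Rad xs ->
  n%:R * sqnorm (viol_vec T) * (asum T / eta - 1 / eta ^+ 2)
  <= n%:R * Rad ^+ 2 + 4 * asum T * n%:R * L * Rad
     + grad_sum_bound * \sum_(t < T) a t ^+ 2.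
Proof.
move=> n0 S0 xsX xsB; have := master_ineq n0 S0 xsB.
have : 0 <= \sum_(t < T) a t * dual_term t xs.
  by apply: sumr_ge0 => t _; rewrite mulr_ge0 ?alpha_ge0 ?dual_term_ge0.
have : \sum_(t < T) a t ^+ 2 * grad_sum t <= grad_sum_bound * \sum_(t < T) a t ^+ 2.
  by rewrite mulr_sumr; apply: ler_sum => t _; rewrite mulrC ler_wpM2r ?sqr_ge0 ?grad_sum_le.
have : n%:R * sqnorm xs <= n%:R * Rad ^+ 2 by rewrite ler_wpM2l // -enorm_leE.
have := ler_wpM2l (mulr_ge0 (ler0n R 2) (ltW S0)) (sum_f_xhat_ge_diam S0 xsB).
lra.
Qed.

(* Abel summation, using [x 0 = 0], [|x t| <= Rad] and the decrease of [a]. *)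
Lemma abel_increments_le T i :
  enorm (\sum_(t < T) a t *: (x t i - x t.+1 i)) <= a 0 * Rad.
Proof.
have abel T' : enorm (\sum_(t < T') a t *: (x t i - x t.+1 i) + a T' *: x T' i)
               <= (a 0 - a T') * Rad.
  elim: T' => [|T' IH]; first by rewrite big_ord0 add0r scaler0 enorm0 subrr mul0r.
  have -> : \sum_(t < T'.+1) a t *: (x t i - x t.+1 i) + a T'.+1 *: x T'.+1 i
      = (\sum_(t < T') a t *: (x t i - x t.+1 i) + a T' *: x T' i)
        + (a T'.+1 - a T') *: x T'.+1 i.
    by rewrite big_ord_recr /= scalerBr scalerBl !addrA [LHS]addrAC.
  apply: le_trans (ler_enormD _ _) _.
  rewrite [X in _ + X]enormZ ler0_norm ?subr_le0 ?alpha_le //.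
  have : (a T' - a T'.+1) * enorm (x T'.+1 i) <= (a T' - a T'.+1) * Rad.
    by rewrite ler_wpM2l ?subr_ge0 ?alpha_le ?iter_inball.
  by rewrite opprB; lra.
rewrite -[X in enorm X](addrK (a T *: x T i)); apply: le_trans (ler_enormB _ _) _.
rewrite enormZ ger0_norm ?alpha_ge0 //.
have : a T * enorm (x T i) <= a T * Rad by rewrite ler_wpM2l ?alpha_ge0 ?iter_inball.
by have := abel T; lra.
Qed.

(* The projection moves [sum_j W_kj y_j] by at most its distance to the ball
   point [sum_j W_kj x_j], which is [a t |sum_j W_kj gx_j|]. *)
Lemma mixing_residual_le t :
  \sum_k enorm (x t.+1 k - \sum_j W k j *: x t j)
  <= 2 * a t * \sum_j enorm (gx j (x t j) (lam t j)).
Proof.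
rewrite mulr_sumr -[X in _ <= X]sum_mix; apply: ler_sum => k _; rewrite algo_stateS /=.
set y := \sum_j W k j *: (x t j - a t *: gx j (x t j) (lam t j)).
set w := \sum_j W k j *: x t j.
have wB : enorm w <= Rad by apply: enorm_convex_comb_le => // j; exact: iter_inball.
have yw : y - w = - (a t *: \sum_j W k j *: gx j (x t j) (lam t j)).
  rewrite /y /w -sumrB scaler_sumr -sumrN; apply: eq_bigr => j _.
  by rewrite scalerBr addrC addKr !scalerA mulrC.
have yw_le : enorm (y - w) <= a t * \sum_j W k j * enorm (gx j (x t j) (lam t j)).
  rewrite yw enormN enormZ ger0_norm ?alpha_ge0 // ler_wpM2l ?alpha_ge0 //.
  apply: le_trans (ler_enorm_sum _ _) _; apply: ler_sum => j _.
  by rewrite enormZ ger0_norm.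
have -> : proj_ball Rad y - w = (proj_ball Rad y - y) + (y - w) by rewrite addrA subrK.
apply: le_trans (ler_enormD _ _) _.
have := proj_ball_dist_le y wB.
have -> : \sum_j W k j * (2 * a t * enorm (gx j (x t j) (lam t j)))
   = 2 * (a t * \sum_j W k j * enorm (gx j (x t j) (lam t j))).
  by rewrite !mulr_sumr; apply: eq_bigr => j _; ring.
lra.
Qed.

Definition wsum_iter T i := \sum_(t < T) a t *: x t i.

Local Notation mass_sum T := (\sum_(t < T) a t ^+ 2 * \sum_j dual_mass t j).

Lemma mixing_wsum_le T : \sum_k enorm (wsum_iter T k - \sum_j W k j *: wsum_iter T j)
  <= n%:R * (a 0 * Rad) + 2 * L * (n%:R * \sum_(t < T) a t ^+ 2 + mass_sum T).
Proof.
rewrite -mulrA; have -> : L * (n%:R * \sum_(t < T) a t ^+ 2 + mass_sum T)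
    = \sum_(t < T) a t ^+ 2 * \sum_j (L * (1 + dual_mass t j)).
  rewrite mulrDr mulrA !mulr_sumr -big_split /=; apply: eq_bigr => t _.
  rewrite [in RHS](eq_bigr (fun j => L + L * dual_mass t j)) => [|j _]; last by rewrite mulrDr mulr1.
  by rewrite big_split /= sumr_const_ord -mulr_sumr; ring.
have split k : wsum_iter T k - \sum_j W k j *: wsum_iter T j
    = \sum_(t < T) a t *: (x t k - x t.+1 k)
      + \sum_(t < T) a t *: (x t.+1 k - \sum_j W k j *: x t j).
  rewrite -big_split /= /wsum_iter.
  have -> : \sum_j W k j *: \sum_(t < T) a t *: x t j
      = \sum_(t < T) a t *: \sum_j W k j *: x t j.
    under eq_bigr do rewrite scaler_sumr.
    rewrite exchange_big /=; apply: eq_bigr => t _; rewrite scaler_sumr.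
    by apply: eq_bigr => j _; rewrite !scalerA mulrC.
  by rewrite -sumrB; apply: eq_bigr => t _; rewrite -scalerDr -scalerBr addrA subrK.
under eq_bigr do rewrite split.
apply: le_trans (_ : \sum_k (a 0 * Rad
    + \sum_(t < T) a t * enorm (x t.+1 k - \sum_j W k j *: x t j)) <= _).
  apply: ler_sum => k _; apply: le_trans (ler_enormD _ _) (lerD (abel_increments_le _ _) _).
  apply: le_trans (ler_enorm_sum _ _) _; apply: ler_sum => t _.
  by rewrite enormZ ger0_norm ?alpha_ge0.
rewrite big_split /= sumr_const_ord lerD2l exchange_big mulr_sumr; apply: ler_sum => t _.
rewrite -mulr_sumr.
apply: le_trans (ler_wpM2l (alpha_ge0 Rad_ge0 t) (mixing_residual_le t)) _.
have a0 := alpha_ge0 Rad_ge0 t.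
have : \sum_j enorm (gx j (x t j) (lam t j)) <= \sum_j L * (1 + dual_mass t j).
  by apply: ler_sum => j _; exact: enorm_gradx_le.
move=> /(ler_wpM2l (mulr_ge0 a0 a0)); rewrite expr2; lra.
Qed.

Lemma near_violation_le_feasible x0 : (0 < n)%N -> 0 < Rad -> feasible g x0 -> inball Rad x0 ->
  \forall T \near \oo, violation W Rad eta df g dg T <= 2 * (4 * L * Rad + 2) * eta.
Proof.
move=> n0 Rad_gt0 x0X x0B; have nR : 0 < n%:R :> R by rewrite ltr0n.
near=> T.
have S1 : 1 <= asum T by near: T; exact: near_sum_alpha_ge.
have S_eta : 2 / eta <= asum T by near: T; exact: near_sum_alpha_ge.
have S_Rad : Rad ^+ 2 <= asum T by near: T; exact: near_sum_alpha_ge.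
have QA2 : grad_sum_bound / n%:R * \sum_(t < T) a t ^+ 2 <= asum T.
  by near: T; exact: near_sum_alpha_sqr_le.
have S0 : 0 < asum T := lt_le_trans ltr01 S1.
have := violation_bound_feasible n0 S0 x0X x0B; rewrite violationE => bound.
set M := asum T * (4 * L * Rad + 2).
apply: le_trans (le_of_gap_le (M := M) (sqnorm_ge0 _) eta_gt0 S_eta _) _.
  rewrite -(ler_pM2l nR) mulrA; apply: le_trans bound _.
  have : n%:R * Rad ^+ 2 <= n%:R * asum T by apply: ler_wpM2l.
  have : grad_sum_bound * \sum_(t < T) a t ^+ 2 <= n%:R * asum T.
    by have := ler_wpM2l (ltW nR) QA2; rewrite mulrA mulrCA mulfV ?gt_eqF // mulr1.
  rewrite /M; lra.
by rewrite /M [X in X <= _](_ : _ = 2 * (4 * L * Rad + 2) * eta) //; field; exact: lt0r_neq0.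
Unshelve. all: by end_near.
Qed.

Variable kap : R.
Hypothesis kap_ge0 : 0 <= kap.
Hypothesis consensus_kap : forall u : 'I_n -> 'rV[R]_d,
  \sum_i enorm (u i - n%:R^-1 *: \sum_j u j)
  <= kap * \sum_i enorm (u i - \sum_j W i j *: u j).

Local Notation xavg T := (n%:R^-1 *: \sum_j xh T j).

Lemma xhat_disagreement_le T : 0 < asum T ->
  asum T * \sum_i enorm (xh T i - xavg T)
  <= kap * \sum_k enorm (wsum_iter T k - \sum_j W k j *: wsum_iter T j).
Proof.
move=> S0; have xhE i : xh T i = (asum T)^-1 *: wsum_iter T i by [].
have devE i : xh T i - xavg T
    = (asum T)^-1 *: (wsum_iter T i - n%:R^-1 *: \sum_j wsum_iter T j).
  have avgE : xavg T = (asum T)^-1 *: (n%:R^-1 *: \sum_j wsum_iter T j).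
    by rewrite scalerA mulrC -scalerA [in RHS]scaler_sumr.
  by rewrite avgE xhE -scalerBr.
rewrite (eq_bigr (fun i => (asum T)^-1 *
    enorm (wsum_iter T i - n%:R^-1 *: \sum_j wsum_iter T j))); last first.
  by move=> i _; rewrite devE enormZ ger0_norm // invr_ge0 ltW.
by rewrite -[X in _ * X <= _]mulr_sumr mulrA mulfV ?gt_eqF // mul1r consensus_kap.
Qed.

Lemma xavg_inball T : (0 < n)%N -> 0 < asum T -> inball Rad (xavg T).
Proof.
move=> n0 S0; rewrite /inball scaler_sumr; apply: enorm_convex_comb_le => //.
- by rewrite sumr_const_ord mulfV ?nat_n_neq0.
- by move=> j; apply: xhat_inball.
Qed.

Lemma sum_f_xhat_ge_consensus T xs : (0 < n)%N -> 0 < asum T ->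
  favg f xs <= favg f (xavg T) ->
  - (L * \sum_i enorm (xh T i - xavg T)) <= \sum_j (f j (xh T j) - f j xs).
Proof.
move=> n0 S0 xs_opt; have zB := xavg_inball n0 S0; set z := xavg T in zB *.
have fz : \sum_j f j xs <= \sum_j f j z.
  by move: xs_opt; rewrite /favg ler_pM2l // invr_gt0 ltr0n.
apply: le_trans (_ : \sum_j (f j z - f j xs - L * enorm (xh T j - z)) <= _).
  by rewrite !sumrB mulr_sumr; lra.
apply: ler_sum => j _; have := f_subgrad j zB (xhat_inball j S0).
have := dotv_bound (df_bound j zB) (lexx (enorm (xh T j - z))).
by rewrite ler_norml => /andP [? _]; lra.
Qed.

Definition tail_const := 2 * L ^+ 2 * mass_bound + 4 * L ^+ 2 * kap.

Lemma violation_bound_strict T xs del : (0 < n)%N -> 0 < asum T -> inball Rad xs ->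
  favg f xs <= favg f (xavg T) -> (forall k, g k xs <= - del) ->
  n%:R * sqnorm (viol_vec T) * (asum T / eta - 1 / eta ^+ 2)
  <= n%:R * Rad ^+ 2 + 2 * L * kap * n%:R * (a 0 * Rad)
     + (grad_const + 4 * L ^+ 2 * kap * n%:R) * \sum_(t < T) a t ^+ 2
     + \sum_(t < T) a t * ((a t * tail_const - 2 * del) * \sum_j dual_mass t j).
Proof.
move=> n0 S0 xsB xs_opt margin; have := master_ineq n0 S0 xsB.
have L0 : 0 <= L := le_trans (enorm_ge0 _) (df_bound (Ordinal n0) xsB).
have : n%:R * sqnorm xs <= n%:R * Rad ^+ 2 by rewrite ler_wpM2l // -enorm_leE.
have : del * \sum_(t < T) a t * \sum_j dual_mass t j <= \sum_(t < T) a t * dual_term t xs.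
  rewrite mulr_sumr; apply: ler_sum => t _; rewrite mulrCA.
  by rewrite ler_wpM2l ?alpha_ge0 ?dual_term_ge_margin.
have : \sum_(t < T) a t ^+ 2 * grad_sum t
       <= grad_const * \sum_(t < T) a t ^+ 2 + 2 * L ^+ 2 * mass_bound * mass_sum T.
  rewrite !mulr_sumr -big_split /=; apply: ler_sum => t _.
  apply: le_trans (ler_wpM2l (sqr_ge0 _) (grad_sum_le_mass t)) _.
  by rewrite [X in X <= _](_ : _ = grad_const * a t ^+ 2
    + 2 * L ^+ 2 * mass_bound * (a t ^+ 2 * \sum_j dual_mass t j)) //; ring.
have -> : \sum_(t < T) a t * ((a t * tail_const - 2 * del) * \sum_j dual_mass t j)
    = tail_const * mass_sum T - 2 * del * \sum_(t < T) a t * \sum_j dual_mass t j.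
  by rewrite !mulr_sumr -sumrB; apply: eq_bigr => t _; ring.
have := mixing_wsum_le T; have := xhat_disagreement_le S0.
have := sum_f_xhat_ge_consensus n0 S0 xs_opt.
set D := \sum_i enorm _; set B := \sum_k enorm _.
move=> hf hD hB.
have := ler_wpM2l (mulr_ge0 (ler0n R 2) (ltW S0)) hf.
have := ler_wpM2l (mulr_ge0 (ler0n R 2) L0) hD.
have := ler_wpM2l (mulr_ge0 (mulr_ge0 (ler0n R 2) L0) kap_ge0) hB.
rewrite /tail_const; set S := asum T; set M := mass_sum T.
set A2 := \sum_(t < T) a t ^+ 2; set Y := \sum_(t < T) a t * \sum_j dual_mass t j.
lra.
Qed.

Lemma tail_const_ge0 : 0 <= tail_const.
Proof.
have L2 := sqr_ge0 L; have B0 := mass_bound_ge0.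
by apply: addr_ge0; apply: mulr_ge0 => //; apply: mulr_ge0.
Qed.

(* Once [a t * tail_const <= 2 del], i.e. for [t >= t1], the terms are
   nonpositive; the first [t1] terms are bounded using [dual_mass_le]. *)
Lemma tail_sum_le T del t1 : 0 <= del -> a t1 * tail_const <= 2 * del ->
  \sum_(t < T) a t * ((a t * tail_const - 2 * del) * \sum_j dual_mass t j)
  <= t1%:R * (a 0 * (a 0 * tail_const * (n%:R * mass_bound))).
Proof.
move=> del0 t1_del; set M := a 0 * tail_const * (n%:R * mass_bound).
have a00 := alpha_ge0 Rad_ge0 0.
have M0 : 0 <= M.
  by apply: mulr_ge0; [apply: mulr_ge0 => //; exact: tail_const_ge0 | rewrite mulr_ge0 ?mass_bound_ge0].

apply: le_trans (_ : \sum_(t < T) (if (t < t1)%N then a 0 * M else 0) <= _).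
  apply: ler_sum => t _.
  have mass0 : 0 <= \sum_j dual_mass t j by apply: sumr_ge0 => j _; exact: dual_mass_ge0.
  have massB : \sum_j dual_mass t j <= n%:R * mass_bound.
    by rewrite -sumr_const_ord; apply: ler_sum => j _; exact: dual_mass_le.
  have at0 := alpha_ge0 Rad_ge0 t; have at_le := alpha_le Rad_ge0 (leq0n t).
  have c0 := tail_const_ge0.
  case: ifP => [_ | /negbT]; last first.
    rewrite -leqNgt => /(alpha_le Rad_ge0) at_t1.
    have : a t * tail_const <= a t1 * tail_const by rewrite ler_wpM2r.
    by move=> ?; rewrite mulr_ge0_le0 // mulr_le0_ge0 //; lra.
  set X := (a t * tail_const - 2 * del) * \sum_j dual_mass t j.
  have XM : X <= M.
    case: (lerP 0 (a t * tail_const - 2 * del)) => sgn; last first.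
      by apply: le_trans M0; rewrite /X nmulr_rle0.
    apply: ler_pM => //.
    have : a t * tail_const <= a 0 * tail_const by rewrite ler_wpM2r.
    lra.
  have : a t * X <= a t * M by rewrite ler_wpM2l.
  have : a t * M <= a 0 * M by rewrite ler_wpM2r.
  lra.
by apply: sum_indicator_le; rewrite mulr_ge0.
Qed.

Lemma grad_const_ge0 : 0 <= grad_const.
Proof.
have L2 : 0 <= 2 * L ^+ 2 := mulr_ge0 (ler0n _ 2) (sqr_ge0 L).
have G4 : 0 <= 4 * gbound ^+ 2 := mulr_ge0 (ler0n _ 4) (sqr_ge0 gbound).
by apply: mulr_ge0 => //; apply: addr_ge0 => //; apply: mulr_ge0.
Qed.

Definition strict_rate_const :=
  2 * (1 + 2 * (grad_const + 4 * L ^+ 2 * kap * n%:R) * Rad ^+ 2) / (n%:R * Rad).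

Lemma near_violation_le_strict xs del : (0 < n)%N -> 0 < Rad -> 0 < del ->
  inball Rad xs -> (forall k, g k xs <= - del) ->
  (forall z, inball Rad z -> favg f xs <= favg f z) ->
  \forall T \near \oo, violation W Rad eta df g dg T
                      <= strict_rate_const * (eta * ln T%:R / Num.sqrt T%:R).
Proof.
move=> n0 Rad_gt0 del0 xsB margin xs_opt; have nR : 0 < n%:R :> R by rewrite ltr0n.
have c_ge0 := tail_const_ge0.
have [t1 t1_le] := exists_alpha_le Rad (divr_gt0 (mulr_gt0 (ltr0Sn R 1) del0) (ltr_wpDl c_ge0 ltr01)).
have t1_del : a t1 * tail_const <= 2 * del.
  apply: le_trans (_ : a t1 * (tail_const + 1) <= _); first by rewrite ler_wpM2l ?alpha_ge0 ?lerDl.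
  by rewrite -ler_pdivlMr ?ltr_wpDl.
set c3 := grad_const + 4 * L ^+ 2 * kap * n%:R.
have c3_ge0 : 0 <= c3.
  by apply: addr_ge0; [exact: grad_const_ge0 | do 3!apply: mulr_ge0 => //; exact: sqr_ge0].
set K0 := n%:R * Rad ^+ 2 + 2 * L * kap * n%:R * (a 0 * Rad)
  + t1%:R * (a 0 * (a 0 * tail_const * (n%:R * mass_bound))).
near=> T.
have T0 : (0 < T)%N by near: T; exact: nbhs_infty_gt.
have S_eta : 2 / eta <= asum T by near: T; exact: near_sum_alpha_ge.
have lnT1 : 1 <= ln (T%:R : R) by near: T; exact: near_ln_ge.
have lnK0 : K0 <= ln (T%:R : R) by near: T; exact: near_ln_ge.
have S_ge := sum_alpha_ge Rad_ge0 T0; have A2_le := sum_alpha_sqr_le Rad T0.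
have sT0 : 0 < Num.sqrt (T%:R : R) by rewrite sqrtr_gt0 ltr0n.
have S0 : 0 < asum T := lt_le_trans (mulr_gt0 Rad_gt0 sT0) S_ge.
have := violation_bound_strict n0 S0 xsB (xs_opt _ (xavg_inball n0 S0)) margin.
have := tail_sum_le T (ltW del0) t1_del; rewrite violationE.
set M := (1 + 2 * c3 * Rad ^+ 2) * ln (T%:R : R) / n%:R => tail bound.
apply: le_trans (le_of_gap_le (M := M) (sqnorm_ge0 _) eta_gt0 S_eta _) _.
  rewrite -(ler_pM2l nR) mulrA; apply: le_trans bound _.
  rewrite /M [X in _ <= X]mulrCA mulfV ?gt_eqF // mulr1.
  have : c3 * \sum_(t < T) a t ^+ 2 <= c3 * (Rad ^+ 2 * (1 + ln (T%:R : R))).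
    exact: ler_wpM2l.
  have : c3 * Rad ^+ 2 <= c3 * Rad ^+ 2 * ln (T%:R : R).
    by rewrite -[X in X <= _]mulr1 ler_wpM2l // mulr_ge0 ?sqr_ge0.
  rewrite /K0 /c3 in lnK0 *; lra.
have M0 : 0 <= M by rewrite divr_ge0 ?mulr_ge0 ?addr_ge0 ?mulr_ge0 ?sqr_ge0 ?ler0n //; lra.
apply: le_trans (_ : 2 * eta * M / (Rad * Num.sqrt T%:R) <= _).
  apply: ler_wpM2l; first exact: mulr_ge0 (mulr_ge0 (ler0n _ 2) (ltW eta_gt0)) M0.
  by rewrite lef_pV2 ?posrE ?mulr_gt0.
rewrite [X in X <= _](_ : _ = strict_rate_const * (eta * ln T%:R / Num.sqrt T%:R)) //.
by rewrite /M /strict_rate_const /c3; field; rewrite !gt_eqF.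
Unshelve. all: by end_near.
Qed.

End Analysis.

Lemma inball_convex (R : realType) k (r : R) : convex_setP (@inball R k r).
Proof.
move=> x y t xB yB t0 t1; rewrite /inball; apply: le_trans (ler_enormD _ _) _.
rewrite !enormZ !ger0_norm ?subr_ge0 //.
have : t * enorm x <= t * r by rewrite ler_wpM2l.
have : (1 - t) * enorm y <= (1 - t) * r by rewrite ler_wpM2l ?subr_ge0.
lra.
Qed.

Lemma favg_convex (R : realType) n d (S : 'rV[R]_d -> Prop) (f : 'I_n -> 'rV[R]_d -> R) :
  (forall i, convex_on S (f i)) -> convex_on S (favg f).
Proof.
move=> fconv x y t xS yS t0 t1; rewrite /favg.
rewrite (_ : t * _ + _ = n%:R^-1 * (t * \sum_i f i x + (1 - t) * \sum_i f i y)); last by ring.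
rewrite ler_wpM2l ?invr_ge0 // !mulr_sumr -big_split; apply: ler_sum => i _; exact: fconv.
Qed.

(* Moving from [xs] towards [z] by [t = del / (c + del)] keeps the constraints
   satisfied, and convexity then transfers optimality to [z]. *)
Lemma strict_minimizer_convex (R : realType) m d (S : 'rV[R]_d -> Prop)
    (F : 'rV[R]_d -> R) (g : 'I_m -> 'rV[R]_d -> R) (xs z : 'rV[R]_d) (c del : R) :
  convex_setP S -> convex_on S F -> (forall k, convex_on S (g k)) ->
  0 <= c -> 0 < del -> (forall k, g k xs <= - del) ->
  (forall k y, S y -> g k y <= g k xs + c) ->
  (forall y, S y -> feasible g y -> F xs <= F y) ->
  S xs -> S z -> F xs <= F z.
Proof.
move=> Sconv Fconv gconv c0 del0 margin g_le xs_opt xsS zS.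
have cdel : 0 < c + del := ltr_wpDl c0 del0.
set t := del / (c + del).
have t0 : 0 < t by rewrite divr_gt0.
have t1 : t <= 1 by rewrite ler_pdivrMr // mul1r lerDr.
have tc : t * c <= del.
  by rewrite /t mulrAC ler_pdivrMr //; apply: ler_wpM2l; rewrite ?lerDl ltW.
set p := t *: z + (1 - t) *: xs.
have pS : S p by apply: Sconv => //; exact: ltW.
have pX : feasible g p.
  move=> k; apply: le_trans (gconv k _ _ _ zS xsS (ltW t0) t1) _.
  have := g_le k z zS; have := margin k.
  have : t * g k z <= t * (g k xs + c) by apply: ler_wpM2l; [exact: ltW | exact: g_le].
  lra.
have := xs_opt p pS pX; have := Fconv _ _ _ zS xsS (ltW t0) t1.
move=> Fp Fxs; suff : t * F xs <= t * F z by rewrite ler_pM2l.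
lra.
Qed.

Lemma subgrad_lipschitz (R : realType) k (S : 'rV[R]_k -> Prop) (h : 'rV[R]_k -> R)
    (x y v : 'rV[R]_k) (Lv : R) :
  subgrad_on S h y v -> enorm v <= Lv -> S x -> h y <= h x + Lv * enorm (x - y).
Proof.
move=> hy vL xS; have := hy x xS.
by have := dotv_bound vL (lexx (enorm (x - y))); rewrite ler_norml; lra.
Qed.

Lemma strict_minimizer_on_ball (R : realType) n m d (f : 'I_n -> 'rV[R]_d -> R)
    (g : 'I_m -> 'rV[R]_d -> R) (dg : 'I_m -> 'rV[R]_d -> 'rV[R]_d) (L Rad del : R) xs :
  (forall i, convex_on (inball Rad) (f i)) -> (forall k, convex_on (inball Rad) (g k)) ->
  (forall k x, inball Rad x -> subgrad_on (inball Rad) (g k) x (dg k x)) ->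
  (forall k x, inball Rad x -> enorm (dg k x) <= L) ->
  0 < del -> (forall k, g k xs <= - del) -> inball Rad xs ->
  (forall y, feasible g y -> favg f xs <= favg f y) ->
  forall z, inball Rad z -> favg f xs <= favg f z.
Proof.
move=> f_conv g_conv g_sub dg_bound del0 margin xsB xs_opt z zB.
have Rad0 : 0 <= Rad := le_trans (enorm_ge0 _) xsB.
apply: (@strict_minimizer_convex _ _ _ _ _ g xs z (`|L| * (2 * Rad)) del) => //.
- exact: inball_convex.
- exact: favg_convex.
- by rewrite mulr_ge0 ?mulr_ge0.
- move=> k y yB; apply: le_trans (subgrad_lipschitz (g_sub k y yB) (dg_bound k y yB) xsB) _.
  rewrite lerD2l; apply: le_trans (ler_wpM2r (enorm_ge0 _) (ler_norm L)) _.
  apply: ler_wpM2l => //; apply: le_trans (ler_enormB _ _) _.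
  by move: xsB yB; rewrite /inball; lra.
- by move=> y _; exact: xs_opt.
Qed.

(* For [Rad = 0] all stepsizes vanish and [xhat] is [0 / 0 = 0]. *)
Lemma violation_Rad0 (R : realType) n m d (W : 'M[R]_n) (eta : R)
    (df : 'I_n -> 'rV[R]_d -> 'rV[R]_d) (g : 'I_m -> 'rV[R]_d -> R)
    (dg : 'I_m -> 'rV[R]_d -> 'rV[R]_d) T :
  feasible g 0 -> violation W 0 eta df g dg T = 0.
Proof.
move=> g0; have xhat0 i : xhat W 0 eta df g dg T i = 0.
  by rewrite /xhat big1 ?invr0 ?scale0r // => t _; rewrite /alpha mul0r.
rewrite /violation (eq_bigr (fun=> gvec g 0)) => [|i _]; last by rewrite xhat0.
have -> : pospart (n%:R^-1 *: \sum_(i < n) gvec g 0) = 0.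
  apply/rowP => k; rewrite !mxE summxE max_l //.
  by rewrite mulr_ge0_le0 ?invr_ge0 // sumr_le0 // => i _; rewrite mxE g0.
by rewrite enorm0 expr0n.
Qed.

Theorem theorem3 (R : realType) (n m d : nat)
  (f : 'I_n -> 'rV[R]_d -> R) (df : 'I_n -> 'rV[R]_d -> 'rV[R]_d)
  (g : 'I_m -> 'rV[R]_d -> R) (dg : 'I_m -> 'rV[R]_d -> 'rV[R]_d)
  (L Rad : R) (E : rel 'I_n) (W : 'M[R]_n) :
  (* X = {x | g(x) <= 0} is non-empty, convex and compact *)
  (exists x, feasible g x) ->
  convex_setP (feasible g) ->
  compact ([set x | feasible g x] : set 'rV[R]_d) ->
  (* Rad is the smallest radius with X contained in B_d(Rad) *)
  (forall x, feasible g x -> inball Rad x) ->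
  (forall r, (forall x, feasible g x -> inball r x) -> Rad <= r) ->
  (* Slater vector *)
  (exists xt, forall k, g k xt < 0) ->
  (* convexity on B_d(Rad) and bounded subgradients used by the algorithm *)
  (forall i, convex_on (inball Rad) (f i)) ->
  (forall k, convex_on (inball Rad) (g k)) ->
  (forall i x, inball Rad x -> subgrad_on (inball Rad) (f i) x (df i x)) ->
  (forall k x, inball Rad x -> subgrad_on (inball Rad) (g k) x (dg k x)) ->
  (forall i x, inball Rad x -> enorm (df i x) <= L) ->
  (forall k x, inball Rad x -> enorm (dg k x) <= L) ->
  (* connected (undirected) communication graph with n >= 1 agents *)
  (0 < n)%N ->
  (forall i j, E i j = E j i) ->
  (forall i j, connect E i j) ->
  (* W doubly stochastic, supported exactly on the edges *)
  (forall i j, 0 <= W i j) ->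
  (forall i, \sum_(j < n) W i j = 1) ->
  (forall j, \sum_(i < n) W i j = 1) ->
  (forall i j, E i j -> 0 < W i j) ->
  (forall i j, ~~ E i j -> W i j = 0) ->
  (* Part 1: violation^2 = O(eta) as T -> oo, constant independent of eta *)
  (exists C : R, forall eta : R, 0 < eta ->
     (forall t : nat, eta * alpha Rad t <= 1 / 2) ->
     exists T0 : nat, forall T : nat, (T0 <= T)%N ->
       violation W Rad eta df g dg T <= C * eta)
  /\
  (* Part 2: if an optimal solution is strictly feasible, violation^2 = O(eta log T / sqrt T) *)
  (forall xs, feasible g xs -> (forall x, feasible g x -> favg f xs <= favg f x) ->
     (forall k, g k xs < 0) ->
     exists C : R, forall eta : R, 0 < eta ->
       (forall t : nat, eta * alpha Rad t <= 1 / 2) ->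
       exists T0 : nat, forall T : nat, (T0 <= T)%N ->
         violation W Rad eta df g dg T <= C * (eta * ln (T%:R) / Num.sqrt (T%:R))).
Proof.
move=> [x0 x0X] _ _ X_ball _ _ f_conv g_conv f_sub g_sub df_bd dg_bd n0 _ E_conn
  W_ge0 W_row1 W_col1 W_edge _.
have Rad0 : 0 <= Rad := le_trans (enorm_ge0 _) (X_ball x0 x0X).
have [Rad_eq0 | Rad_neq0] := eqVneq Rad 0.
  have x0_eq0 : x0 = 0.
    have := X_ball x0 x0X; rewrite /inball Rad_eq0 enorm_leE // expr0n => x0_le.
    by apply: sqnorm_eq0; apply/eqP; rewrite eq_le x0_le sqnorm_ge0.
  have zeroX : feasible g 0 by rewrite -x0_eq0.
  split=> [|xs _ _ _]; exists 0 => eta _ _; exists 0%N => T _;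
    by rewrite Rad_eq0 violation_Rad0 // mul0r.
have Rad_gt0 : 0 < Rad by rewrite lt_def Rad_neq0.
split=> [|xs xsX xs_opt xs_strict].
  exists (2 * (4 * L * Rad + 2)) => eta eta0 eta_alpha; apply: near_inftyP.
  exact: (near_violation_le_feasible Rad0 eta0 eta_alpha W_ge0 W_row1 W_col1 f_sub g_sub
    df_bd dg_bd n0 Rad_gt0 x0X (X_ball x0 x0X)).
have [kap [kap0 kapP]] := consensus_error_le n0 W_ge0 W_row1 W_col1 W_edge E_conn d.
have [del del0 margin] := exists_neg_margin xs_strict.
have xs_ball_opt := strict_minimizer_on_ball f_conv g_conv g_sub dg_bd del0 margin
  (X_ball xs xsX) xs_opt.
exists (strict_rate_const n Rad L g kap) => eta eta0 eta_alpha; apply: near_inftyP.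
exact: (near_violation_le_strict Rad0 eta0 eta_alpha W_ge0 W_row1 W_col1 f_sub g_sub
  df_bd dg_bd kap0 kapP n0 Rad_gt0 del0 (X_ball xs xsX) margin xs_ball_opt).
Qed.
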